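(* Let $\kappa<\lambda$ be infinite cardinals with $\kappa$ regular. Let $\mathcal I$ be a normal $\kappa^+$-complete ideal on $\mathcal P_{\kappa^+}(\lambda)$, and assume that the quotient forcing $\mathcal P(\mathcal P_{\kappa^+}(\lambda))/\mathcal I$ has a $\kappa$-closed dense subset. Then $\mathrm{RC}(\kappa,\lambda)$ holds: every non-special tree of height $\kappa$ and size at most $\lambda$ has a non-special subtree of height $\kappa$ and size less than $\kappa^+$.
   Context: For a set $X$ and cardinal $\mu$, $\mathcal P_\mu(X)$ is the set of subsets of $X$ of size less than $\mu$. An ideal $\mathcal I$ on $\mathcal P_{\kappa^+}(\lambda)$ is $\kappa^+$-complete if it is closed under unions of at most $\kappa$ many members, and normal if it is fine (for each $\xi<\lambda$, $\{x:\xi\notin x\}\in\mathcal I$) and for every $\mathcal I$-positive set $A$ and every function $f$ on $A$ with $f(x)\in x$ for all $x\in A$, $f$ is constant on an $\mathcal I$-positive subset of $A$. The forcing $\mathcal P(\mathcal P_{\kappa^+}(\lambda))/\mathcal I$ consists of the $\mathcal I$-positive subsets of $\mathcal P_{\kappa^+}(\lambda)$ modulo $\mathcal I$, ordered by inclusion modulo $\mathcal I$. A forcing is $\kappa$-closed if every descending sequence of conditions of length less than $\kappa$ has a lower bound. A tree is a partial order $(T,<_T)$ in which the predecessors of each node are well-ordered. For a regular cardinal $\kappa$ and a tree $T$ of height $\kappa$, $T$ is special if there is $f:T\to T$ with $f(t)<_T t$ for all $t$ and such that for every $t\in T$, $f^{-1}[\{t\}]$ is a union of fewer than $\kappa$ antichains.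 For regular $\kappa$ and cardinal $\mu\ge\kappa^+$, $\mathrm{RC}(\kappa,\mu)$ states that every non-special tree of height $\kappa$ and size at most $\mu$ has a non-special subtree of height $\kappa$ and size less than $\kappa^+$. *)

(* Cardinals are modelled by types (|A| = cardinality of the
   type A); the regular cardinal kappa is modelled by a type K carrying a
   well-order ltK whose order type is kappa (an initial ordinal); ordinals
   < kappa are the proper initial segments {j : K | ltK j a}. *)

Definition inj_le (A B : Type) : Prop :=
  exists f : A -> B, forall x y, f x = f y -> x = y.

Definition card_lt (A B : Type) : Prop := inj_le A B /\ ~ inj_le B A.

Definition well_order (K : Type) (lt : K -> K -> Prop) : Prop :=
  (forall x, ~ lt x x) /\
  (forall x y z, lt x y -> lt y z -> lt x z) /\
  (forall x y, lt x y \/ x = y \/ lt y x) /\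
  well_founded lt.

Definition is_cardinal (K : Type) (lt : K -> K -> Prop) : Prop :=
  forall a : K, ~ inj_le K {x : K | lt x a}.

Definition infinite (K : Type) : Prop := inj_le nat K.

Definition regular (K : Type) (lt : K -> K -> Prop) : Prop :=
  forall A : K -> Prop, (forall a, exists b, A b /\ ~ lt b a) ->
    inj_le K {b : K | A b}.

Definition order_iso (A B : Type) (RA : A -> A -> Prop) (RB : B -> B -> Prop)
  : Prop :=
  exists f : A -> B,
    (forall x y, f x = f y -> x = y) /\ (forall y, exists x, f x = y) /\
    (forall x y, RA x y <-> RB (f x) (f y)).

Definition preds (T : Type) (R : T -> T -> Prop) (t : T) : Type :=
  {s : T | R s t}.

Definition preds_rel (T : Type) (R : T -> T -> Prop) (t : T)
  (a b : preds T R t) : Prop := R (proj1_sig a) (proj1_sig b).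

Definition is_tree (T : Type) (R : T -> T -> Prop) : Prop :=
  (forall x, ~ R x x) /\
  (forall x y z, R x y -> R y z -> R x z) /\
  (forall t, (forall a b : preds T R t,
                preds_rel T R t a b \/ a = b \/ preds_rel T R t b a) /\
             well_founded (preds_rel T R t)).

Definition init_seg (K : Type) (ltK : K -> K -> Prop) (a : K) : Type :=
  {j : K | ltK j a}.

Definition init_seg_rel (K : Type) (ltK : K -> K -> Prop) (a : K)
  (i j : init_seg K ltK a) : Prop := ltK (proj1_sig i) (proj1_sig j).

Definition node_height (K : Type) (ltK : K -> K -> Prop)
  (T : Type) (R : T -> T -> Prop) (t : T) (a : K) : Prop :=
  order_iso (preds T R t) (init_seg K ltK a)
            (preds_rel T R t) (init_seg_rel K ltK a).

Definition has_height (K : Type) (ltK : K -> K -> Prop)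
  (T : Type) (R : T -> T -> Prop) : Prop :=
  (forall t, exists a, node_height K ltK T R t a) /\
  (forall a, exists t, node_height K ltK T R t a).

Definition antichain (T : Type) (R : T -> T -> Prop) (A : T -> Prop) : Prop :=
  forall x y, A x -> A y -> x <> y -> ~ R x y /\ ~ R y x.

Definition special (K : Type) (T : Type) (R : T -> T -> Prop) : Prop :=
  exists f : T -> T,
    (forall t, (exists s, R s t) -> R (f t) t) /\
    (forall u : T, exists (J : Type) (Ac : J -> T -> Prop),
        card_lt J K /\ (forall j, antichain T R (Ac j)) /\
        (forall t, (exists s, R s t) -> f t = u -> exists j, Ac j t)).

Definition subtree (T : Type) (S : T -> Prop) : Type := {t : T | S t}.

Definition subtree_rel (T : Type) (R : T -> T -> Prop) (S : T -> Prop)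
  (a b : subtree T S) : Prop := R (proj1_sig a) (proj1_sig b).

Definition RC (K : Type) (ltK : K -> K -> Prop) (L : Type) : Prop :=
  forall (T : Type) (R : T -> T -> Prop),
    is_tree T R -> has_height K ltK T R -> inj_le T L -> ~ special K T R ->
    exists S : T -> Prop,
      has_height K ltK (subtree T S) (subtree_rel T R S) /\
      inj_le (subtree T S) K /\
      ~ special K (subtree T S) (subtree_rel T R S).

(* P_{kappa^+}(lambda): subsets of L of size <= kappa *)
Definition PK (K L : Type) : Type :=
  {x : L -> Prop | inj_le {l : L | x l} K}.

Definition ideal (K L : Type) (I : (PK K L -> Prop) -> Prop) : Prop :=
  I (fun _ => False) /\
  ~ I (fun _ => True) /\
  (forall A B : PK K L -> Prop, (forall x, A x -> B x) -> I B -> I A) /\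
  (forall A B, I A -> I B -> I (fun x => A x \/ B x)).

Definition kplus_complete (K L : Type) (I : (PK K L -> Prop) -> Prop) : Prop :=
  forall (J : Type) (F : J -> PK K L -> Prop),
    inj_le J K -> (forall j, I (F j)) -> I (fun x => exists j, F j x).

Definition normal (K L : Type) (I : (PK K L -> Prop) -> Prop) : Prop :=
  (forall xi : L, I (fun x => ~ proj1_sig x xi)) /\
  (forall (A : PK K L -> Prop) (f : PK K L -> L),
     ~ I A -> (forall x, A x -> proj1_sig x (f x)) ->
     exists xi : L, ~ I (fun x => A x /\ f x = xi)).

Definition le_I (K L : Type) (I : (PK K L -> Prop) -> Prop)
  (A B : PK K L -> Prop) : Prop := I (fun x => A x /\ ~ B x).

(* D (a set of I-positive sets, i.e. of representatives of conditions)
   is dense in the quotient forcing *)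
Definition dense_I (K L : Type) (I : (PK K L -> Prop) -> Prop)
  (D : (PK K L -> Prop) -> Prop) : Prop :=
  (forall A, D A -> ~ I A) /\
  (forall A, ~ I A -> exists B, D B /\ le_I K L I B A).

Definition kappa_closed (K : Type) (ltK : K -> K -> Prop) (L : Type)
  (I : (PK K L -> Prop) -> Prop) (D : (PK K L -> Prop) -> Prop) : Prop :=
  forall (a : K) (s : init_seg K ltK a -> PK K L -> Prop),
    (forall i, D (s i)) ->
    (forall i j, init_seg_rel K ltK a i j -> le_I K L I (s j) (s i)) ->
    exists B, D B /\ forall i, le_I K L I B (s i).

From Stdlib Require Import Classical ClassicalEpsilon ProofIrrelevance FunctionalExtensionality.

(* Suppose T is not special, but every subtree of height kappa and size at most
   kappa is.  Fix an injection e of T into lambda.  By normality and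
   completeness, for almost every x in P_{kappa^+}(lambda) the trace
   {t | e t \in x} is a downward closed subtree meeting every level, hence is
   special, witnessed by a regressive g_x and indices idx_x t < bd_x (g_x t)
   such that nodes with equal g_x-value and index are incomparable.  Recursion
   along the tree, using the kappa-closed dense set, gives conditions P_t,
   decreasing along branches, each of which decides g_x t, idx_x t and
   bd_x t (kappa^+-completeness).  For s < t some x in P_t realises the
   decisions at both s and t, so the decided values witness that T itself is
   special. *)

Lemma proj1_sig_inj (A : Type) (P : A -> Prop) (a b : {x | P x}) :
  proj1_sig a = proj1_sig b -> a = b.
Proof. apply eq_sig_hprop; intros; apply proof_irrelevance. Qed.

Lemma inj_le_refl (A : Type) : inj_le A A.
Proof. exists (fun x => x); auto. Qed.

Lemma inj_le_trans (A B C : Type) : inj_le A B -> inj_le B C -> inj_le A C.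
Proof. intros [f Hf] [g Hg]; exists (fun x => g (f x)); auto. Qed.

Lemma inj_le_sig (A : Type) (P : A -> Prop) : inj_le {x | P x} A.
Proof. exists (@proj1_sig A P); apply proj1_sig_inj. Qed.

Lemma node_height_preds_small K ltK T R t a :
  node_height K ltK T R t a -> inj_le (preds T R t) K.
Proof.
  intros [phi [Hphi _]]. apply inj_le_trans with (init_seg K ltK a).
  - exists phi; exact Hphi.
  - apply inj_le_sig.
Qed.

Lemma tree_well_founded T R : is_tree T R -> well_founded R.
Proof.
  intros (_ & Htrans & Hpreds) t. constructor. intros s Hst.
  destruct (Hpreds t) as [_ Hwf].
  assert (Hacc : forall y : preds T R t, Acc R (proj1_sig y)).
  { intro y. induction (Hwf y) as [[y Hy] _ IH]. constructor. intros r Hr.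
    exact (IH (exist _ r (Htrans _ _ _ Hr Hy)) Hr). }
  exact (Hacc (exist _ s Hst)).
Qed.

Definition downward_closed (T : Type) (R : T -> T -> Prop) (S : T -> Prop) : Prop :=
  forall t s, S t -> R s t -> S s.

Lemma subtree_node_height K ltK T R (S : T -> Prop) (a : subtree T S) k :
  downward_closed T R S -> node_height K ltK T R (proj1_sig a) k ->
  node_height K ltK (subtree T S) (subtree_rel T R S) a k.
Proof.
  intros Hdown [phi [Hinj [Hsurj Hiso]]].
  exists (fun b : preds (subtree T S) (subtree_rel T R S) a =>
            phi (exist (fun s => R s (proj1_sig a)) (proj1_sig (proj1_sig b)) (proj2_sig b))).
  split; [|split].
  - intros b1 b2 E. apply Hinj in E. do 2 apply proj1_sig_inj.
    exact (f_equal (@proj1_sig _ _) E).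
  - intro y. destruct (Hsurj y) as [[s Hs] Ey].
    exists (exist (fun b => subtree_rel T R S b a)
              (exist S s (Hdown _ s (proj2_sig a) Hs)) Hs).
    exact Ey.
  - intros b1 b2. apply (Hiso (exist _ _ _) (exist _ _ _)).
Qed.

Lemma regular_bounded_image K ltK (J : Type) (iota : J -> K) :
  regular K ltK -> (forall x y, iota x = iota y -> x = y) -> ~ inj_le K J ->
  exists b, forall j, ltK (iota j) b.
Proof.
  intros Hreg Hinj HJ. apply NNPP; intro Hunb. apply HJ.
  assert (Hcof : forall a, exists b, (exists j, iota j = b) /\ ~ ltK b a).
  { intro a. apply NNPP; intro H. apply Hunb. exists a. intro j.
    apply NNPP; intro H'. apply H. exists (iota j). eauto. }
  destruct (Hreg _ Hcof) as [f Hf].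
  destruct (choice (fun (y : {b | exists j, iota j = b}) j => iota j = proj1_sig y))
    as [pre Hpre]; [intro y; exact (proj2_sig y)|].
  exists (fun k => pre (f k)). intros x y E.
  apply Hf, proj1_sig_inj. rewrite <- (Hpre (f x)), <- (Hpre (f y)). congruence.
Qed.

Definition nonminimal (T : Type) (R : T -> T -> Prop) (t : T) : Prop := exists s, R s t.

(* [special] restricted to the nodes in S, with the fewer than kappa antichains
   covering the fibre of u indexed by the ordinals below [bd u]; by regularity
   of kappa nothing is lost. *)
Definition indexed_special (K : Type) (ltK : K -> K -> Prop) (T : Type)
  (R : T -> T -> Prop) (S : T -> Prop) (g : T -> T) (idx bd : T -> K) : Prop :=
  (forall t, S t -> nonminimal T R t -> R (g t) t) /\
  (forall s t, S s -> S t -> nonminimal T R s -> nonminimal T R t ->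
     g s = g t -> idx s = idx t -> s <> t -> ~ R s t) /\
  (forall t, S t -> nonminimal T R t -> ltK (idx t) (bd (g t))).

Lemma indexed_special_sub K ltK T R (S S' : T -> Prop) g idx bd :
  (forall t, S' t -> S t) -> indexed_special K ltK T R S g idx bd ->
  indexed_special K ltK T R S' g idx bd.
Proof. intros HS (Hg & Hanti & Hbd). split; [|split]; eauto. Qed.

Lemma special_of_indexed_special K ltK T R g idx bd :
  is_cardinal K ltK -> indexed_special K ltK T R (fun _ => True) g idx bd ->
  special K T R.
Proof.
  intros Hcard (Hg & Hanti & Hbd). exists g. split; [intros t; apply Hg; exact I|].
  intro u. exists (init_seg K ltK (bd u)).
  exists (fun j t => g t = u /\ idx t = proj1_sig j /\ nonminimal T R t).
  split; [split; [apply inj_le_sig | apply Hcard] | split].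
  - intros j s t (Gs & Is & Ns) (Gt & It & Nt) Hst.
    split; apply Hanti; auto; congruence.
  - intros t Nt Gt. assert (Hlt : ltK (idx t) (bd u)) by (rewrite <- Gt; exact (Hbd t I Nt)).
    exists (exist _ (idx t) Hlt). simpl; auto.
Qed.

Lemma indexed_special_of_special K ltK T R :
  regular K ltK -> special K T R ->
  exists g idx bd, indexed_special K ltK T R (fun _ => True) g idx bd.
Proof.
  intros Hreg [f [Hf Hfib]].
  assert (Hlayer : forall u, exists (b : K) (h : T -> K),
    (forall t, nonminimal T R t -> f t = u -> ltK (h t) b) /\
    (forall s t, nonminimal T R s -> nonminimal T R t -> f s = u -> f t = u ->
       h s = h t -> s <> t -> ~ R s t)).
  { intro u. destruct (Hfib u) as (J & Ac & [[iota Hiota] HJ] & Hac & Hcov).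
    destruct (regular_bounded_image K ltK J iota Hreg Hiota HJ) as [b Hb].
    destruct (choice (fun t k => nonminimal T R t -> f t = u ->
                        exists j, Ac j t /\ iota j = k)) as [h Hh].
    { intro t. destruct (classic (nonminimal T R t /\ f t = u)) as [[Nt Ft]|Hout].
      - destruct (Hcov t Nt Ft) as [j Hj]. exists (iota j). eauto.
      - exists b. intros Nt Ft. tauto. }
    exists b, h. split.
    - intros t Nt Ft. destruct (Hh t Nt Ft) as [j [_ <-]]. apply Hb.
    - intros s t Ns Nt Fs Ft E Hst.
      destruct (Hh s Ns Fs) as [j [Hj Ej]]. destruct (Hh t Nt Ft) as [j' [Hj' Ej']].
      assert (j = j') as <- by (apply Hiota; congruence).
      exact (proj1 (Hac j s t Hj Hj' Hst)). }
  destruct (choice _ Hlayer) as [bd Hbd]. destruct (choice _ Hbd) as [h Hh].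
  exists f, (fun t => h (f t) t), bd. split; [|split].
  - intros t _. apply Hf.
  - intros s t _ _ Ns Nt E Ih. rewrite E in Ih. apply (proj2 (Hh (f t))); auto.
  - intros t _ Nt. apply (proj1 (Hh (f t))); auto.
Qed.

Definition extend (T A : Type) (S : T -> Prop) (d : subtree T S -> A) (dflt : T -> A)
  (t : T) : A :=
  match excluded_middle_informative (S t) with
  | left H => d (exist S t H)
  | right _ => dflt t
  end.

Lemma extend_in T A S d dflt (a : subtree T S) : extend T A S d dflt (proj1_sig a) = d a.
Proof.
  unfold extend. destruct (excluded_middle_informative _) as [H|H].
  - f_equal. apply proj1_sig_inj. reflexivity.
  - destruct (H (proj2_sig a)).
Qed.

Lemma indexed_special_extend K ltK T R (S : T -> Prop) (k0 : K) g idx bd :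
  downward_closed T R S ->
  indexed_special K ltK (subtree T S) (subtree_rel T R S) (fun _ => True) g idx bd ->
  exists g' idx' bd', indexed_special K ltK T R S g' idx' bd'.
Proof.
  intros Hdown (Hg & Hanti & Hbd).
  assert (Hnm : forall a : subtree T S, nonminimal T R (proj1_sig a) ->
                  nonminimal (subtree T S) (subtree_rel T R S) a).
  { intros [t Ht] [s Hs]. exists (exist S s (Hdown t s Ht Hs)). exact Hs. }
  exists (extend T T S (fun a => proj1_sig (g a)) (fun t => t)),
         (extend T K S idx (fun _ => k0)), (extend T K S bd (fun _ => k0)).
  split; [|split].
  - intros t Ht Nt. rewrite (extend_in T T S _ _ (exist S t Ht)).
    exact (Hg _ I (Hnm (exist S t Ht) Nt)).
  - intros s t Hs Ht Ns Nt Eg Ei Hst.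
    rewrite (extend_in T T S _ _ (exist S s Hs)), (extend_in T T S _ _ (exist S t Ht)) in Eg.
    rewrite (extend_in T K S _ _ (exist S s Hs)), (extend_in T K S _ _ (exist S t Ht)) in Ei.
    apply (Hanti (exist S s Hs) (exist S t Ht) I I (Hnm (exist S s Hs) Ns) (Hnm (exist S t Ht) Nt));
      [apply proj1_sig_inj; exact Eg | exact Ei |].
    intro E. apply Hst. exact (f_equal (@proj1_sig _ _) E).
  - intros t Ht Nt. set (a := exist S t Ht).
    rewrite (extend_in T T S _ _ a), (extend_in T K S _ _ a), (extend_in T K S _ _ (g a)).
    exact (Hbd a I (Hnm a Nt)).
Qed.

Section Ideal.

Context {K L : Type} {I : (PK K L -> Prop) -> Prop}.
Hypothesis Hid : ideal K L I.

Lemma ideal_sub (A B : PK K L -> Prop) : (forall x, A x -> B x) -> I B -> I A.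
Proof. apply (proj1 (proj2 (proj2 Hid))). Qed.

Lemma ideal_union (A B : PK K L -> Prop) : I A -> I B -> I (fun x => A x \/ B x).
Proof. apply (proj2 (proj2 (proj2 Hid))). Qed.

Lemma ideal_cover (A B C : PK K L -> Prop) :
  I A -> I B -> (forall x, C x -> A x \/ B x) -> I C.
Proof. intros HA HB HC. apply ideal_sub with (1 := HC). apply ideal_union; assumption. Qed.

Lemma ideal_empty (A : PK K L -> Prop) : (forall x, ~ A x) -> I A.
Proof. intro HA. apply ideal_sub with (B := fun _ => False); [exact HA | apply Hid]. Qed.

Lemma positive_avoids_null (A B : PK K L -> Prop) : ~ I A -> I B -> exists x, A x /\ ~ B x.
Proof.
  intros HA HB. apply NNPP; intro Hno. apply HA. apply ideal_sub with (B := B); [|exact HB].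
  intros x Ax. apply NNPP; intro Bx. eauto.
Qed.

Lemma le_I_trans (A B C : PK K L -> Prop) :
  le_I K L I A B -> le_I K L I B C -> le_I K L I A C.
Proof.
  intros HAB HBC. apply ideal_cover with (1 := HAB) (2 := HBC).
  intros x [Ax Cx]. destruct (classic (B x)); tauto.
Qed.

Hypothesis Hc : kplus_complete K L I.

Lemma complete_ideal_pigeonhole (Y : Type) (v : PK K L -> Y) (P : Y -> Prop) (q : PK K L -> Prop) :
  inj_le {y | P y} K -> ~ I q -> I (fun x => q x /\ ~ P (v x)) ->
  exists w, P w /\ ~ I (fun x => q x /\ v x = w).
Proof.
  intros Hsmall Hq Hout. apply NNPP; intro Hno. apply Hq.
  assert (Hin : I (fun x => exists w : {y | P y}, q x /\ v x = proj1_sig w)).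
  { apply (Hc _ (fun w x => q x /\ v x = proj1_sig w) Hsmall). intros [w Pw].
    apply NNPP; intro Hw. apply Hno. exists w; auto. }
  apply ideal_cover with (1 := Hin) (2 := Hout).
  intros x qx. destruct (classic (P (v x))) as [Pv|Pv].
  - left. exists (exist P (v x) Pv). auto.
  - right. auto.
Qed.

End Ideal.

Section Descending.

Context {K : Type} {ltK : K -> K -> Prop} {L : Type} {I : (PK K L -> Prop) -> Prop}
  {D : (PK K L -> Prop) -> Prop}.
Hypotheses (Hid : ideal K L I) (Hd : dense_I K L I D) (Hkc : kappa_closed K ltK L I D).
Context {T : Type} {R : T -> T -> Prop}.
Hypotheses (Htree : is_tree T R) (Hh : forall t, exists a, node_height K ltK T R t a).

Definition descending_below (t : T) (h : forall s, R s t -> PK K L -> Prop) : Prop :=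
  (forall s H, D (h s H)) /\
  (forall s s' H H', R s s' -> le_I K L I (h s' H') (h s H)).

Lemma branch_lower_bound (t : T) (a : K) (h : forall s, R s t -> PK K L -> Prop) :
  node_height K ltK T R t a -> descending_below t h ->
  exists B, D B /\ forall s H, le_I K L I B (h s H).
Proof.
  intros [phi [Hinj [Hsurj Hiso]]] [HD Hdesc].
  destruct (choice (fun i s => phi s = i) Hsurj) as [psi Hpsi].
  destruct (Hkc a (fun i => h (proj1_sig (psi i)) (proj2_sig (psi i)))) as [B [DB HB]].
  - intro i. apply HD.
  - intros i j Hij. apply Hdesc, Hiso. rewrite !Hpsi. exact Hij.
  - exists B. split; [exact DB|]. intros s H.
    assert (E : psi (phi (exist _ s H)) = exist _ s H) by (apply Hinj, Hpsi).
    specialize (HB (phi (exist _ s H))). rewrite E in HB. exact HB.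
Qed.

Lemma descending_family (Q : T -> (PK K L -> Prop) -> Prop) :
  (forall t q, D q -> exists p, D p /\ le_I K L I p q /\ Q t p) ->
  exists P : T -> PK K L -> Prop, forall t,
    D (P t) /\ (forall s, R s t -> le_I K L I (P t) (P s)) /\ Q t (P t).
Proof.
  intro Hext.
  assert (Hstep : forall t h, exists p,
    D p /\ Q t p /\ (descending_below t h -> forall s H, le_I K L I p (h s H))).
  { intros t h.
    assert (HB : exists B, D B /\ (descending_below t h -> forall s H, le_I K L I B (h s H))).
    { destruct (classic (descending_below t h)) as [Hdes|Hndes].
      - destruct (Hh t) as [a Ha].
        destruct (branch_lower_bound t a h Ha Hdes) as [B [DB HB]]. eauto.
      - destruct (proj2 Hd (fun _ => True) (proj1 (proj2 Hid))) as [B [DB _]].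
        exists B. split; [exact DB | contradiction]. }
    destruct HB as [B [DB HB]]. destruct (Hext t B DB) as [p (Dp & HpB & Qp)].
    exists p. split; [exact Dp | split; [exact Qp|]].
    intros Hdes s H. apply le_I_trans with B; auto. }
  pose (step t h := proj1_sig (constructive_indefinite_description _ (Hstep t h))).
  pose (P := Fix (tree_well_founded T R Htree) (fun _ => PK K L -> Prop) step).
  assert (Punfold : forall t, P t = step t (fun s _ => P s)).
  { intro t. apply (Fix_eq _ _ step). intros x f1 f2 Hf.
    replace f2 with f1; [reflexivity|].
    apply functional_extensionality_dep; intro y.
    apply functional_extensionality_dep; intro Hy. apply Hf. }
  exists P. intro t. induction t as [t IH] using (well_founded_ind (tree_well_founded T R Htree)).
  pose proof (proj2_sig (constructive_indefinite_description _ (Hstep t (fun s _ => P s))))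
    as (Dp & Qp & Hbelow).
  fold (step t (fun s _ => P s)) in Dp, Qp, Hbelow. rewrite <- Punfold in Dp, Qp, Hbelow.
  split; [exact Dp | split; [|exact Qp]].
  intros s Hs. apply (Hbelow (conj (fun s H => proj1 (IH s H))
                                  (fun s s' H H' Hss' => proj1 (proj2 (IH s' H')) s Hss')) s Hs).
Qed.

End Descending.

Section Coherence.

Context {K : Type} {ltK : K -> K -> Prop} {L : Type} {I : (PK K L -> Prop) -> Prop}
  {D : (PK K L -> Prop) -> Prop}.
Hypotheses (Hid : ideal K L I) (Hc : kplus_complete K L I)
  (Hd : dense_I K L I D) (Hkc : kappa_closed K ltK L I D).
Context {T : Type} {R : T -> T -> Prop}.
Hypotheses (Htree : is_tree T R) (Hh : forall t, exists a, node_height K ltK T R t a).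
Context (S : PK K L -> T -> Prop) (g : PK K L -> T -> T) (idx bd : PK K L -> T -> K).
Hypotheses (HS : forall t, I (fun x => ~ S x t))
  (Hsp : forall x, indexed_special K ltK T R (S x) (g x) (idx x) (bd x)).

(* g x t is decided only at nonminimal t, where it ranges over the at most
   kappa predecessors of t. *)
Definition agrees (t G : T) (i b : K) (x : PK K L) : Prop :=
  S x t /\ (nonminimal T R t -> g x t = G) /\ idx x t = i /\ bd x t = b.

Lemma decide_node (t : T) (q : PK K L -> Prop) : ~ I q ->
  exists G i b p, D p /\ le_I K L I p q /\ I (fun x => p x /\ ~ agrees t G i b x).
Proof.
  intro Hq.
  assert (Hq0 : ~ I (fun x => q x /\ S x t)).
  { intro H. apply Hq. apply (ideal_cover Hid) with (1 := H) (2 := HS t).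
    intros x qx. destruct (classic (S x t)); tauto. }
  assert (HG : exists G, ~ I (fun x => (q x /\ S x t) /\ (nonminimal T R t -> g x t = G))).
  { destruct (classic (nonminimal T R t)) as [Nt|Mt].
    - destruct (Hh t) as [a Ha].
      destruct (complete_ideal_pigeonhole Hid Hc _ (fun x => g x t) (fun s => R s t) _
                  (node_height_preds_small _ _ _ _ _ _ Ha) Hq0) as [G [_ HG]].
      + apply (ideal_empty Hid). intros x [[_ Sx] Hout]. exact (Hout (proj1 (Hsp x) t Sx Nt)).
      + exists G. intro H. apply HG. apply (ideal_sub Hid) with (2 := H). intuition.
    - exists t. intro H. apply Hq0. apply (ideal_sub Hid) with (2 := H). intuition. }
  destruct HG as [G HG].
  destruct (complete_ideal_pigeonhole Hid Hc _ (fun x => idx x t) (fun _ => True) _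
              (inj_le_sig _ _) HG) as [i [_ Hi]]; [apply (ideal_empty Hid); tauto|].
  destruct (complete_ideal_pigeonhole Hid Hc _ (fun x => bd x t) (fun _ => True) _
              (inj_le_sig _ _) Hi) as [b [_ Hb]]; [apply (ideal_empty Hid); tauto|].
  destruct (proj2 Hd _ Hb) as [p [Dp Hp]].
  exists G, i, b, p. split; [exact Dp | split];
    apply (ideal_sub Hid) with (2 := Hp); unfold agrees; intuition.
Qed.

Lemma indexed_special_of_decisions :
  exists G i b, indexed_special K ltK T R (fun _ => True) G i b.
Proof.
  destruct (descending_family Hid Hd Hkc Htree Hh
              (fun t p => exists G i b, I (fun x => p x /\ ~ agrees t G i b x)))
    as [P HP].
  { intros t q Dq.
    destruct (decide_node t q (proj1 Hd q Dq)) as (G & i & b & p & Dp & Hpq & Hp).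
    exists p. repeat split; eauto. }
  assert (Hdec : forall t, exists G i b, I (fun x => P t x /\ ~ agrees t G i b x))
    by (intro t; apply HP).
  destruct (choice _ Hdec) as [G HG].
  destruct (choice _ HG) as [i Hi]. destruct (choice _ Hi) as [b Hb].
  assert (Hpair : forall s t, R s t ->
            exists x, agrees t (G t) (i t) (b t) x /\ agrees s (G s) (i s) (b s) x).
  { intros s t Hst.
    destruct (positive_avoids_null Hid (P t)
                (fun x => (P t x /\ ~ P s x) \/ (P t x /\ ~ agrees t (G t) (i t) (b t) x)
                          \/ (P s x /\ ~ agrees s (G s) (i s) (b s) x)))
      as [x [Px Hx]].
    - exact (proj1 Hd _ (proj1 (HP t))).
    - apply (ideal_union Hid); [exact (proj1 (proj2 (HP t)) s Hst)|].
      apply (ideal_union Hid); apply Hb.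
    - exists x. split; apply NNPP; intro H; tauto. }
  assert (HG_reg : forall t, nonminimal T R t -> R (G t) t).
  { intros t [s Hst]. destruct (Hpair s t Hst) as [x [(Sx & Gx & _) _]].
    rewrite <- (Gx (ex_intro _ s Hst)). exact (proj1 (Hsp x) t Sx (ex_intro _ s Hst)). }
  exists G, i, b. split; [|split].
  - intros t _. exact (HG_reg t).
  - intros s t _ _ Ns Nt Eg Ei Hne Hst.
    destruct (Hpair s t Hst) as [x [(St & Gt & It & _) (Ss & Gs & Is & _)]].
    apply (proj1 (proj2 (Hsp x)) s t Ss St Ns Nt); auto.
    + rewrite (Gs Ns), (Gt Nt). exact Eg.
    + congruence.
  - intros t _ Nt.
    destruct (Hpair (G t) t (HG_reg t Nt)) as [x [(St & Gt & It & _) (_ & _ & _ & Bu)]].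
    rewrite <- It, <- Bu, <- (Gt Nt). exact (proj2 (proj2 (Hsp x)) t St Nt).
Qed.

End Coherence.

Lemma special_of_ae_indexed_special K ltK L I D T R :
  ideal K L I -> kplus_complete K L I -> dense_I K L I D -> kappa_closed K ltK L I D ->
  is_tree T R -> (forall t, exists a, node_height K ltK T R t a) -> is_cardinal K ltK ->
  forall S : PK K L -> T -> Prop, (forall t, I (fun x => ~ S x t)) ->
  (forall x, exists g idx bd, indexed_special K ltK T R (S x) g idx bd) ->
  special K T R.
Proof.
  intros Hid Hc Hd Hkc Htree Hh Hcard S HS Hsp.
  destruct (choice _ Hsp) as [g Hg]. destruct (choice _ Hg) as [idx Hidx].
  destruct (choice _ Hidx) as [bd Hbd].
  destruct (indexed_special_of_decisions Hid Hc Hd Hkc Htree Hh S g idx bd HS Hbd)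
    as (G & i & b & HGib).
  exact (special_of_indexed_special K ltK T R G i b Hcard HGib).
Qed.

Definition trace (K L T : Type) (e : T -> L) (x : PK K L) (t : T) : Prop := proj1_sig x (e t).

Lemma trace_subtree_small K L T (e : T -> L) (x : PK K L) :
  (forall t t', e t = e t' -> t = t') -> inj_le (subtree T (trace K L T e x)) K.
Proof.
  intro He. apply inj_le_trans with {l : L | proj1_sig x l}; [|exact (proj2_sig x)].
  exists (fun a : subtree T (trace K L T e x) => exist _ (e (proj1_sig a)) (proj2_sig a)).
  intros a b E. apply proj1_sig_inj, He. exact (f_equal (@proj1_sig _ _) E).
Qed.

Lemma subtree_has_height K ltK T R (S : T -> Prop) (lev : K -> T) :
  has_height K ltK T R -> (forall k, node_height K ltK T R (lev k) k) ->
  downward_closed T R S -> (forall k, S (lev k)) ->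
  has_height K ltK (subtree T S) (subtree_rel T R S).
Proof.
  intros [Hnode _] Hlev Hdown HS. split.
  - intro a. destruct (Hnode (proj1_sig a)) as [k Hk].
    exists k. apply subtree_node_height; assumption.
  - intro k. exists (exist S (lev k) (HS k)).
    apply subtree_node_height; [exact Hdown | exact (Hlev k)].
Qed.

(* Normality presses the choice of a node t of x with a predecessor outside x
   down to a single t on a positive set; but the predecessors of t are at most
   kappa many and each lies in almost every x. *)
Lemma normal_ae_downward_closed K L I T R (e : T -> L) :
  ideal K L I -> kplus_complete K L I -> normal K L I ->
  (forall t t', e t = e t' -> t = t') -> (forall t, inj_le (preds T R t) K) ->
  I (fun x => ~ downward_closed T R (trace K L T e x)).
Proof.
  intros Hid Hc [Hfine Hnormal] He Hsmall.
  pose (A x := exists t s, trace K L T e x t /\ R s t /\ ~ trace K L T e x s).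
  apply (ideal_sub Hid) with (B := A).
  { intros x Hx. apply NNPP; intro HA. apply Hx. intros t s Ht Hst.
    apply NNPP; intro Hs. apply HA. exists t, s. auto. }
  apply NNPP; intro HA.
  destruct (positive_avoids_null Hid A _ HA (proj1 Hid)) as [x0 [[t0 _] _]].
  destruct (choice (fun x l => A x -> exists t, l = e t /\ trace K L T e x t /\
                                  exists s, R s t /\ ~ trace K L T e x s)) as [f Hf].
  { intro x. destruct (classic (A x)) as [[t [s Hts]]|HnA].
    - exists (e t). intros _. exists t. intuition eauto.
    - exists (e t0). contradiction. }
  destruct (Hnormal A f HA) as [xi Hxi].
  { intros x Ax. destruct (Hf x Ax) as [t [-> [Ht _]]]. exact Ht. }
  destruct (positive_avoids_null Hid _ _ Hxi (proj1 Hid)) as [x1 [[Ax1 Ex1] _]].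
  destruct (Hf x1 Ax1) as [t1 [Et1 _]].
  apply Hxi, (ideal_sub Hid) with (B := fun x => exists s : preds T R t1,
                                            ~ trace K L T e x (proj1_sig s)).
  - intros x [Ax Ex]. destruct (Hf x Ax) as [t [Et [_ [s [Hst Hs]]]]].
    assert (t = t1) as -> by (apply He; congruence).
    exists (exist _ s Hst). exact Hs.
  - apply Hc; [apply Hsmall | intro s; apply Hfine].
Qed.

Lemma ae_trace_good K L I T R (e : T -> L) (lev : K -> T) :
  ideal K L I -> kplus_complete K L I -> normal K L I ->
  (forall t t', e t = e t' -> t = t') -> (forall t, inj_le (preds T R t) K) ->
  I (fun x => ~ (downward_closed T R (trace K L T e x) /\ forall k, trace K L T e x (lev k))).
Proof.
  intros Hid Hc Hn He Hsmall.
  apply (ideal_cover Hid) with (1 := normal_ae_downward_closed K L I T R e Hid Hc Hn He Hsmall)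
    (2 := Hc K (fun k x => ~ trace K L T e x (lev k)) (inj_le_refl K)
            (fun k => proj1 Hn (e (lev k)))).
  intros x Hx. destruct (classic (downward_closed T R (trace K L T e x))) as [Hdx|Hdx];
    [right | left; exact Hdx].
  apply not_all_ex_not. intro Hlx. exact (Hx (conj Hdx Hlx)).
Qed.

Lemma trace_indexed_special K ltK L T R (e : T -> L) (lev : K -> T) (k0 : K) (x : PK K L) :
  regular K ltK -> has_height K ltK T R -> (forall k, node_height K ltK T R (lev k) k) ->
  (forall t t', e t = e t' -> t = t') ->
  (forall S, has_height K ltK (subtree T S) (subtree_rel T R S) -> inj_le (subtree T S) K ->
     special K (subtree T S) (subtree_rel T R S)) ->
  downward_closed T R (trace K L T e x) -> (forall k, trace K L T e x (lev k)) ->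
  exists g idx bd, indexed_special K ltK T R (trace K L T e x) g idx bd.
Proof.
  intros Hreg Hh Hlev He Hsmall_special Hdown Hlevx.
  pose proof (Hsmall_special (trace K L T e x)
                (subtree_has_height K ltK T R _ lev Hh Hlev Hdown Hlevx)
                (trace_subtree_small K L T e x He)) as Hsp.
  destruct (indexed_special_of_special _ _ _ _ Hreg Hsp) as (g & idx & bd & Hgib).
  exact (indexed_special_extend K ltK T R _ k0 g idx bd Hdown Hgib).
Qed.

Theorem mainTheorem2 :
  forall (K : Type) (ltK : K -> K -> Prop) (L : Type)
         (I : (PK K L -> Prop) -> Prop),
    well_order K ltK -> is_cardinal K ltK -> infinite K -> regular K ltK ->
    card_lt K L ->
    ideal K L I -> kplus_complete K L I -> normal K L I ->
    (exists D, dense_I K L I D /\ kappa_closed K ltK L I D) ->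
    RC K ltK L.
Proof.
  intros K ltK L I _ Hcard [nat_K _] Hreg _ Hid Hc Hn [D [Hd Hkc]] T R Htree Hh [e He] Hns.
  apply NNPP; intro Hno; apply Hns.
  assert (Hsmall_special : forall S, has_height K ltK (subtree T S) (subtree_rel T R S) ->
            inj_le (subtree T S) K -> special K (subtree T S) (subtree_rel T R S)).
  { intros S H1 H2. apply NNPP; intro H3. apply Hno. exists S; auto. }
  assert (Hsmall : forall t, inj_le (preds T R t) K).
  { intro t. destruct (proj1 Hh t) as [a Ha]. exact (node_height_preds_small _ _ _ _ _ _ Ha). }
  destruct (choice _ (proj2 Hh)) as [lev Hlev].
  pose (good x := downward_closed T R (trace K L T e x) /\ forall k, trace K L T e x (lev k)).
  apply (special_of_ae_indexed_special K ltK L I D T R Hid Hc Hd Hkc Htree (proj1 Hh) Hcard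
           (fun x t => good x /\ trace K L T e x t)).
  - intro t. apply (ideal_cover Hid) with (2 := proj1 Hn (e t))
      (1 := ae_trace_good K L I T R e lev Hid Hc Hn He Hsmall).
    intros x Hx. destruct (classic (good x)); tauto.
  - intro x. destruct (classic (good x)) as [[Hdown Hlevx]|Hbad].
    + destruct (trace_indexed_special K ltK L T R e lev (nat_K 0) x Hreg Hh Hlev He
                  Hsmall_special Hdown Hlevx) as (g & idx & bd & Hgib).
      exists g, idx, bd. apply (indexed_special_sub K ltK T R (trace K L T e x)); tauto.
    + exists (fun t => t), (fun _ => nat_K 0), (fun _ => nat_K 0).
      split; [|split]; intros; tauto.
Qed.
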